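(* Let $p,s\in\mathbb{N}$. There does not exist a $p$-qubit UPB of size $s$ when $2^p-4<s<2^p$.
   Context: A product state in $(\mathbb{C}^2)^{\otimes p}$ is a vector $|v_1\rangle\otimes\cdots\otimes|v_p\rangle$ with each $|v_j\rangle\in\mathbb{C}^2$. A $p$-qubit unextendible product basis (UPB) is a finite set $\mathcal{S}\subseteq(\mathbb{C}^2)^{\otimes p}$ of unit product vectors that are pairwise orthogonal, such that no nonzero product vector outside $\mathcal{S}$ is orthogonal to every element of $\mathcal{S}$. The size of a UPB is its number of elements. *)

From HB Require Import structures.
From mathcomp Require Import all_boot all_order all_algebra.
Set Implicit Arguments. Unset Strict Implicit. Unset Printing Implicit Defensive.
Import Order.TTheory GRing.Theory Num.Theory.
Local Open Scope ring_scope.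

(* Computational basis of (C^2)^{(x) p}: bit strings b : 'I_p -> 'I_2. *)
Definition qidx (p : nat) := {ffun 'I_p -> 'I_2}.

(* Vectors of (C^2)^{(x) p}, as coordinate functions on the basis. *)
Definition qvec (C : numClosedFieldType) (p : nat) := {ffun qidx p -> C}.

Definition tensor (C : numClosedFieldType) (p : nat) (v : 'I_p -> 'I_2 -> C)
  : qvec C p := [ffun b : qidx p => \prod_(j < p) v j (b j)].

Definition is_product (C : numClosedFieldType) (p : nat) (x : qvec C p) : Prop :=
  exists v : 'I_p -> 'I_2 -> C, x = tensor v.

Definition qdot (C : numClosedFieldType) (p : nat) (x y : qvec C p) : C :=
  \sum_(b : qidx p) (x b)^* * y b.

Definition is_UPB (C : numClosedFieldType) (p : nat) (S : seq (qvec C p)) : Prop :=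
  [/\ uniq S,
      (forall x, x \in S -> is_product x /\ qdot x x = 1),
      (forall x y, x \in S -> y \in S -> x != y -> qdot x y = 0) &
      (forall z : qvec C p, is_product z -> z != 0 -> z \notin S ->
         exists2 x, x \in S & qdot x z != 0)].

From HB Require Import structures.
From mathcomp Require Import all_boot all_order all_algebra.
Import Order.TTheory GRing.Theory Num.Theory.
From mathcomp Require Import ring zify.

(* We prove a stronger statement, gap_extendible: any s pairwise orthogonal
   nonzero product vectors in (C^2)^{(x) q} with 2^q - 4 < s < 2^q admit a
   nonzero product vector orthogonal to all of them.  For a UPB this contradicts
   unextendibility.  The proof is by induction on q.

   On C^2, "parallel or orthogonal" is an equivalence relation on nonzero
   vectors, so the first factors split the family into classes, each the union
   of a parallel half and an orthogonal half.  The tails (the remaining q-qubit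
   factors) are orthogonal across classes and within a half, so tail ranks add
   over classes and a class has at most twice its rank many members.  Counting
   then yields a pivot: a class with a half X such that every other class has a
   half spanning its tails.  X and these halves form an orthogonal family Z of
   q-qubit product vectors with 2^q - 4 < |Z| < 2^q; the induction hypothesis
   gives a product vector orthogonal to Z, hence (by rank) to every tail outside
   the pivot class, and a suitable first factor handles the rest of the pivot. *)

Local Open Scope ring_scope.

Section Qubit.
Context {C : numClosedFieldType}.
Implicit Types a b c : 'I_2 -> C.

Definition dot2 a b : C := \sum_(i < 2) (a i)^* * b i.
Definition det2 a b : C := a ord0 * b ord_max - a ord_max * b ord0.
Definition nz2 a := dot2 a a != 0.

Lemma dot2E a b : dot2 a b = (a ord0)^* * b ord0 + (a ord_max)^* * b ord_max.
Proof.
rewrite /dot2 big_ord_recr big_ord1 /=.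
by have -> : widen_ord (leqnSn 1) ord0 = ord0 :> 'I_2 by apply: val_inj.
Qed.

Lemma dot2C a b : dot2 b a = (dot2 a b)^*.
Proof. by rewrite !dot2E rmorphD /= !rmorphM /= !conjCK; ring. Qed.

Lemma dot2_eq0C a b : (dot2 b a == 0) = (dot2 a b == 0).
Proof. by rewrite dot2C conjC_eq0. Qed.

Lemma det2_eq0C a b : (det2 b a == 0) = (det2 a b == 0).
Proof. by rewrite -oppr_eq0 /det2 opprB [b ord0 * _]mulrC [b ord_max * _]mulrC. Qed.

Lemma nz2E a : nz2 a = (a ord0 != 0) || (a ord_max != 0).
Proof.
rewrite /nz2 dot2E paddr_eq0 ?[_^* * _]mulrC ?mul_conjC_ge0 //.
by rewrite !mul_conjC_eq0 negb_and.
Qed.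

Lemma nz2_cancel {b x} : nz2 b -> b ord0 * x = 0 -> b ord_max * x = 0 -> x = 0.
Proof.
rewrite nz2E => /orP[] nb e0 e1; apply/eqP.
- by move/eqP: e0; rewrite mulf_eq0 (negbTE nb).
- by move/eqP: e1; rewrite mulf_eq0 (negbTE nb).
Qed.

Lemma nz2_cancel_conj {b x} :
  nz2 b -> (b ord0)^* * x = 0 -> (b ord_max)^* * x = 0 -> x = 0.
Proof.
rewrite nz2E => /orP[] nb e0 e1; apply/eqP.
- by move/eqP: e0; rewrite mulf_eq0 conjC_eq0 (negbTE nb).
- by move/eqP: e1; rewrite mulf_eq0 conjC_eq0 (negbTE nb).
Qed.

(* Geometry of C^2: through a nonzero vector b, being parallel (det2 = 0)
   and being orthogonal (dot2 = 0) compose like the signs + and -. *)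
Lemma orth_orth_par {a b c} : nz2 b -> dot2 a b = 0 -> dot2 b c = 0 -> det2 a c = 0.
Proof.
move=> nb hab hbc; apply: (nz2_cancel_conj nb).
- have -> : (b ord0)^* * det2 a c = c ord_max * (dot2 a b)^* - a ord_max * dot2 b c.
    by rewrite !dot2E rmorphD /= !rmorphM /= !conjCK /det2; ring.
  by rewrite hab hbc rmorph0 !mulr0 subrr.
- have -> : (b ord_max)^* * det2 a c = a ord0 * dot2 b c - c ord0 * (dot2 a b)^*.
    by rewrite !dot2E rmorphD /= !rmorphM /= !conjCK /det2; ring.
  by rewrite hab hbc rmorph0 !mulr0 subrr.
Qed.

Lemma par_par {a b c} : nz2 b -> det2 a b = 0 -> det2 b c = 0 -> det2 a c = 0.
Proof.
move=> nb hab hbc; apply: (nz2_cancel nb).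
- have -> : b ord0 * det2 a c = a ord0 * det2 b c + c ord0 * det2 a b.
    by rewrite /det2; ring.
  by rewrite hab hbc !mulr0 addr0.
- have -> : b ord_max * det2 a c = a ord_max * det2 b c + c ord_max * det2 a b.
    by rewrite /det2; ring.
  by rewrite hab hbc !mulr0 addr0.
Qed.

Lemma par_orth {a b c} : nz2 b -> det2 a b = 0 -> dot2 b c = 0 -> dot2 a c = 0.
Proof.
move=> nb hab hbc; apply: (nz2_cancel_conj nb).
- have -> : (b ord0)^* * dot2 a c = (a ord0)^* * dot2 b c - c ord_max * (det2 a b)^*.
    by rewrite !dot2E /det2 rmorphB /= !rmorphM /=; ring.
  by rewrite hab hbc rmorph0 !mulr0 subrr.
- have -> : (b ord_max)^* * dot2 a c = (a ord_max)^* * dot2 b c + c ord0 * (det2 a b)^*.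
    by rewrite !dot2E /det2 rmorphB /= !rmorphM /=; ring.
  by rewrite hab hbc rmorph0 !mulr0 addr0.
Qed.

Lemma par_nonorth {a b} : nz2 a -> nz2 b -> det2 a b = 0 -> dot2 a b != 0.
Proof.
move=> na nb hab; apply/eqP => oab.
have hba : det2 b a = 0 by apply/eqP; rewrite det2_eq0C hab.
by move: nb; rewrite /nz2 (par_orth na hba oab) eqxx.
Qed.

(* "Parallel or orthogonal" is an equivalence relation on nonzero vectors:
   its classes are the pairs {line, orthogonal line}. *)
Definition aligned a b := (det2 a b == 0) || (dot2 a b == 0).

Lemma aligned_refl a : aligned a a.
Proof. by rewrite /aligned /det2 mulrC subrr eqxx. Qed.

Lemma aligned_sym a b : aligned a b = aligned b a.
Proof. by rewrite /aligned det2_eq0C dot2_eq0C. Qed.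

Lemma aligned_trans a b c : nz2 b -> aligned a b -> aligned b c -> aligned a c.
Proof.
move=> nb /orP[] /eqP hab /orP[] /eqP hbc; apply/orP.
- by left; apply/eqP; apply: par_par nb hab hbc.
- by right; apply/eqP; apply: par_orth nb hab hbc.
- right; rewrite -dot2_eq0C; apply/eqP.
  apply: (par_orth nb); last by rewrite dot2C hab rmorph0.
  by apply/eqP; rewrite det2_eq0C hbc.
- by left; apply/eqP; apply: orth_orth_par nb hab hbc.
Qed.

Definition perp b : 'I_2 -> C :=
  fun i => if val i == 0%N then - (b ord_max)^* else (b ord0)^*.

Lemma dot2_perp a b : dot2 a (perp b) = - (det2 a b)^*.
Proof. by rewrite dot2E /perp /= /det2 rmorphB /= !rmorphM /=; ring. Qed.

Lemma nz2_perp b : nz2 b -> nz2 (perp b).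
Proof. by rewrite !nz2E /perp /= oppr_eq0 !conjC_eq0 => /orP[] ->; rewrite ?orbT. Qed.

End Qubit.

(* (C^2)^{(x) q} as a C-vector space of dimension 2^q; its elements are the
   vectors qvec C q, so qdot applies to them. *)
Definition qspace (C : numClosedFieldType) (q : nat) := {ffun qidx q -> C^o}.

Section InnerProduct.
Context {C : numClosedFieldType} {q : nat}.
Implicit Types x y u v : qspace C q.

Lemma dim_space : dim (qspace C q) = (2 ^ q)%N.
Proof. by rewrite /dim /= card_ffun !card_ord muln1. Qed.

Lemma qdotC x y : qdot y x = (qdot x y)^*.
Proof.
rewrite /qdot rmorph_sum; apply: eq_bigr => b _.
by rewrite rmorphM /= conjCK mulrC.
Qed.

Lemma qdot_eq0C x y : (qdot y x == 0) = (qdot x y == 0).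
Proof. by rewrite qdotC conjC_eq0. Qed.

Lemma qdot_linear_comb x (I : finType) (c : I -> C) (Y : I -> qspace C q) :
  qdot x (\sum_i c i *: Y i) = \sum_i c i * qdot x (Y i).
Proof.
rewrite /qdot.
under eq_bigr => b _ do rewrite sum_ffunE big_distrr.
rewrite exchange_big; apply: eq_bigr => i _; rewrite big_distrr.
by apply: eq_bigr => b _; rewrite ffunE /= -[c i *: Y i b]/(c i * Y i b) mulrCA.
Qed.

Lemma qdot_definite x : qdot x x = 0 -> x = 0.
Proof.
move/eqP; rewrite psumr_eq0 => [/allP xx0|b _]; last by rewrite mulrC mul_conjC_ge0.
apply/ffunP => b; rewrite ffunE; apply/eqP.
by have := xx0 b (mem_index_enum _); rewrite mulrC mul_conjC_eq0.
Qed.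

Lemma qdot_span {x} {X : seq (qspace C q)} {u} :
  (forall y, y \in X -> qdot x y = 0) -> u \in <<X>>%VS -> qdot x u = 0.
Proof.
move=> xX uX; rewrite (coord_span (X := in_tuple X) uX) qdot_linear_comb big1 // => i _.
by rewrite xX ?mulr0 // mem_nth.
Qed.

Lemma qdot_span2 {X Y : seq (qspace C q)} {u v} :
  (forall x y, x \in X -> y \in Y -> qdot x y = 0) ->
  u \in <<X>>%VS -> v \in <<Y>>%VS -> qdot u v = 0.
Proof.
move=> XY uX vY; apply: (qdot_span _ vY) => y yY; apply/eqP.
rewrite -qdot_eq0C; apply/eqP; apply: (qdot_span _ uX) => x xX.
by apply/eqP; rewrite qdot_eq0C XY.
Qed.

End InnerProduct.

Section Rank.
Context {C : numClosedFieldType} {q : nat} {T : finType} (f : T -> qspace C q).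
Implicit Types L : {set T}.

Definition spn L := <<[seq f i | i <- enum L]>>%VS.
Definition rk L := \dim (spn L).

Definition orth_between L1 L2 :=
  forall i j, i \in L1 -> j \in L2 -> qdot (f i) (f j) = 0.
Definition pairwise_orth L :=
  forall i j, i \in L -> j \in L -> i != j -> qdot (f i) (f j) = 0.

Lemma spn_mem {L i} : i \in L -> f i \in spn L.
Proof. by move=> iL; apply/memv_span/map_f; rewrite mem_enum. Qed.

Lemma spn_mono L1 L2 : L1 \subset L2 -> (spn L1 <= spn L2)%VS.
Proof.
move/subsetP => sL; apply/span_subvP => _ /mapP[i + ->].
by rewrite mem_enum => /sL; apply: spn_mem.
Qed.

Lemma rk_mono L1 L2 : L1 \subset L2 -> (rk L1 <= rk L2)%N.
Proof. by move/spn_mono/dimvS. Qed.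

Lemma rk_bound L : (rk L <= 2 ^ q)%N.
Proof. by rewrite -(@dim_space C q) -dimvf; apply/dimvS/subvf. Qed.

Lemma rk0 : rk set0 = 0%N.
Proof. by rewrite /rk /spn enum_set0 span_nil dimv0. Qed.

Lemma rk1 i : qdot (f i) (f i) != 0 -> rk [set i] = 1%N.
Proof.
move=> ni; rewrite /rk /spn enum_set1 span_seq1 dim_vline.
suff -> : f i != 0 by [].
by apply: contra ni => /eqP ->; rewrite /qdot big1 // => b _; rewrite ffunE mulr0.
Qed.

Lemma rk_add L1 L2 : orth_between L1 L2 -> rk (L1 :|: L2) = (rk L1 + rk L2)%N.
Proof.
move=> L12; rewrite /rk; have -> : spn (L1 :|: L2) = (spn L1 + spn L2)%VS.
  apply/eqP; rewrite eqEsubv subv_add !spn_mono ?subsetUl ?subsetUr //= andbT.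
  apply/span_subvP => _ /mapP[i + ->]; rewrite mem_enum inE => /orP[] iL.
  - exact: subvP (addvSl _ _) _ (spn_mem iL).
  - exact: subvP (addvSr _ _) _ (spn_mem iL).
rewrite dimv_disjoint_sum //; apply/eqP; rewrite -subv0.
apply/subvP => v; rewrite memv_cap memv0 => /andP[v1 v2]; apply/eqP/qdot_definite.
apply: (qdot_span2 _ v1 v2) => _ _ /mapP[i + ->] /mapP[j + ->].
by rewrite !mem_enum; apply: L12.
Qed.

Lemma rk_pairwise_orth L : pairwise_orth L ->
  (forall i, i \in L -> qdot (f i) (f i) != 0) -> rk L = #|L|.
Proof.
elim: {L}_.+1 {-2}L (ltnSn #|L|) => // n IH L ltL oL nL.
have [->|[i iL]] := set_0Vmem L; first by rewrite rk0 cards0.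
have splitL : L = [set i] :|: (L :\ i) by rewrite setD1K.
have DL : forall j, j \in L :\ i -> j \in L by move=> j /setD1P[].
rewrite {1}splitL rk_add ?rk1 ?nL ?IH ?[in RHS](cardsD1 i L) ?iL //.
- by move: ltL; rewrite (cardsD1 i L) iL.
- by move=> j k /DL jL /DL kL; apply: oL.
- by move=> j /DL; apply: nL.
- by move=> j k /set1P -> /setD1P[ki kL]; apply: oL; rewrite // eq_sym.
Qed.

Lemma pairwise_orthU {L1 L2} : pairwise_orth L1 -> pairwise_orth L2 ->
  orth_between L1 L2 -> pairwise_orth (L1 :|: L2).
Proof.
move=> o1 o2 o12 i j; rewrite !inE => /orP[] iL /orP[] jL ij; try by [apply: o1 | apply: o2].
- exact: o12.
- by apply/eqP; rewrite qdot_eq0C o12.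
Qed.

Lemma rk_orth_ext {L1 L2 w} : L1 \subset L2 -> rk L1 = rk L2 ->
  (forall i, i \in L1 -> qdot (f i) w = 0) -> forall i, i \in L2 -> qdot (f i) w = 0.
Proof.
move=> s12 e12 L1w i iL2.
have fi : f i \in spn L1.
  have /eqP -> : spn L1 == spn L2 by rewrite eqEdim spn_mono //= -/(rk L2) -e12 leqnn.
  exact: spn_mem iL2.
apply/eqP; rewrite -qdot_eq0C; apply/eqP.
apply: (qdot_span _ fi) => _ /mapP[j + ->]; rewrite mem_enum => jL.
by apply/eqP; rewrite qdot_eq0C L1w.
Qed.

End Rank.

Section Tensor.
Context {C : numClosedFieldType}.
Implicit Types c : 'I_2 -> C.

Definition factor_orth {n} (v w : 'I_n -> 'I_2 -> C) :=
  [exists j, dot2 (v j) (w j) == 0].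

Lemma qdot_tensor n (v w : 'I_n -> 'I_2 -> C) :
  qdot (tensor v) (tensor w) = \prod_j dot2 (v j) (w j).
Proof.
rewrite /qdot /dot2 bigA_distr_bigA /=; apply: eq_bigr => b _.
by rewrite !ffunE rmorph_prod -big_split.
Qed.

Lemma qdot_tensor_eq0 n (v w : 'I_n -> 'I_2 -> C) :
  (qdot (tensor v) (tensor w) == 0) = factor_orth v w.
Proof.
rewrite qdot_tensor prodf_seq_eq0; apply/hasP/existsP => [[j _ hj]|[j hj]].
- by exists j.
- by exists j; rewrite ?mem_index_enum.
Qed.

Lemma tensor_nz {n} {v : 'I_n -> 'I_2 -> C} :
  (forall j, nz2 (v j)) -> qdot (tensor v) (tensor v) != 0.
Proof. by move=> nzv; rewrite qdot_tensor_eq0; apply/existsP => -[j]; apply/negP/nzv. Qed.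

Definition qtail {n} (v : 'I_n.+1 -> 'I_2 -> C) : 'I_n -> 'I_2 -> C :=
  fun j => v (lift ord0 j).
Definition qcons {n} c (w : 'I_n -> 'I_2 -> C) : 'I_n.+1 -> 'I_2 -> C :=
  fun j => if unlift ord0 j is Some j' then w j' else c.

Lemma factor_orth_cons n (v : 'I_n.+1 -> 'I_2 -> C) c w :
  factor_orth v (qcons c w) = (dot2 (v ord0) c == 0) || factor_orth (qtail v) w.
Proof.
apply/existsP/orP => [[j]|[hc|/existsP[j hj]]].
- case: (unliftP ord0 j) => [j'|] -> ; rewrite /qcons ?liftK ?unlift_none => hj.
  + by right; apply/existsP; exists j'.
  + by left.
- by exists ord0; rewrite /qcons unlift_none.
- by exists (lift ord0 j); rewrite /qcons liftK.
Qed.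

Lemma factor_orth_split n (v w : 'I_n.+1 -> 'I_2 -> C) :
  factor_orth v w = (dot2 (v ord0) (w ord0) == 0) || factor_orth (qtail v) (qtail w).
Proof.
apply/existsP/orP => [[j]|[hc|/existsP[j hj]]].
- case: (unliftP ord0 j) => [j'|] -> hj; [by right; apply/existsP; exists j' | by left].
- by exists ord0.
- by exists (lift ord0 j).
Qed.

Definition ket0 : 'I_2 -> C := fun i => (val i == 0%N)%:R.

Lemma nz2_ket0 : nz2 ket0.
Proof. by rewrite nz2E /ket0 /= oner_eq0. Qed.

End Tensor.

Definition gap_extendible (C : numClosedFieldType) (q : nat) : Prop :=
  forall (T : finType) (A : {set T}) (V : T -> 'I_q -> 'I_2 -> C),
  {in A, forall i j, nz2 (V i j)} ->
  {in A &, forall i k, i != k -> factor_orth (V i) (V k)} ->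
  (2 ^ q < #|A| + 4)%N -> (#|A| < 2 ^ q)%N ->
  exists2 w, (forall j, nz2 (w j)) & {in A, forall i, factor_orth (V i) w}.

Section Step.
Variables (C : numClosedFieldType) (q : nat) (T : finType) (A : {set T}).
Variable V : T -> 'I_q.+1 -> 'I_2 -> C.
Hypothesis nzV : {in A, forall i j, nz2 (V i j)}.
Hypothesis orthV : {in A &, forall i k, i != k -> factor_orth (V i) (V k)}.

Definition factor0 i := V i ord0.
Definition tail i : qspace C q := tensor (qtail (V i)).
Local Notation rank := (rk tail).

Lemma factor0_nz {i} : i \in A -> nz2 (factor0 i).
Proof. by move=> iA; apply: nzV. Qed.

Lemma tail_nz {i} : i \in A -> qdot (tail i) (tail i) != 0.
Proof. by move=> iA; apply: tensor_nz => j; apply: nzV. Qed.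

Lemma tail_orth i k : i \in A -> k \in A -> i != k ->
  dot2 (factor0 i) (factor0 k) != 0 -> qdot (tail i) (tail k) = 0.
Proof.
move=> iA kA ik hik; apply/eqP; rewrite qdot_tensor_eq0.
by have := orthV _ _ iA kA ik; rewrite factor_orth_split (negbTE hik).
Qed.

Definition cls x := [set i in A | aligned (factor0 x) (factor0 i)].
Definition par x := [set i in A | det2 (factor0 x) (factor0 i) == 0].
Definition orth x := [set i in A | dot2 (factor0 x) (factor0 i) == 0].
Definition is_half x X := X = par x \/ X = orth x.

Lemma cls_sub x : cls x \subset A.
Proof. by apply/subsetP => i; rewrite inE => /andP[]. Qed.

Lemma clsE x : cls x = par x :|: orth x.
Proof. by apply/setP => i; rewrite !inE andb_orr. Qed.

Lemma half_sub {x X} : is_half x X -> X \subset cls x.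
Proof. by rewrite clsE => -[] ->; rewrite ?subsetUl ?subsetUr. Qed.

Lemma card_cls x : x \in A -> #|cls x| = (#|par x| + #|orth x|)%N.
Proof.
move=> xA; rewrite clsE; apply/eqP; rewrite (leq_card_setU _ _).2 -setI_eq0.
apply/eqP/setP => i; rewrite !inE; apply/negP => /andP[/andP[iA hp] /andP[_ ho]].
by move: (par_nonorth (factor0_nz xA) (factor0_nz iA) (eqP hp)); rewrite ho.
Qed.

Lemma cls_self {x} : x \in A -> x \in cls x.
Proof. by move=> xA; rewrite inE xA aligned_refl. Qed.

Lemma cls_same {x y} : x \in A -> y \in cls x -> cls y = cls x.
Proof.
move=> xA; rewrite inE => /andP[yA xy]; apply/setP => i; rewrite !inE.
case iA: (i \in A) => //=; apply/idP/idP => h.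
- by apply: aligned_trans (factor0_nz yA) xy h.
- by apply: aligned_trans (factor0_nz xA) _ h; rewrite aligned_sym.
Qed.

(* Within a half, first factors are parallel, hence not orthogonal, so the
   tails are pairwise orthogonal. *)
Lemma half_pairwise_orth {x X} : x \in A -> is_half x X -> pairwise_orth tail X.
Proof.
move=> xA [] -> i k; rewrite !inE => /andP[iA hi] /andP[kA hk] ik;
  apply: tail_orth => //; apply: par_nonorth (factor0_nz iA) (factor0_nz kA) _.
- by apply: par_par (factor0_nz xA) _ (eqP hk); apply/eqP; rewrite det2_eq0C.
- by apply: orth_orth_par (factor0_nz xA) _ (eqP hk); apply/eqP; rewrite dot2_eq0C.
Qed.

Lemma rk_half {x X} : x \in A -> is_half x X -> rank X = #|X|.
Proof.
move=> xA hX; apply: rk_pairwise_orth; first exact: half_pairwise_orth hX.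
by move=> i /(subsetP (half_sub hX)) /(subsetP (cls_sub x)); apply: tail_nz.
Qed.

Lemma half_le {x X} : x \in A -> is_half x X -> (#|X| <= rank (cls x))%N.
Proof. by move=> xA hX; rewrite -(rk_half xA hX) rk_mono ?half_sub. Qed.

(* As both halves are orthogonal families, a class has at most twice its
   rank many members. *)
Lemma cls_le {x} : x \in A -> (#|cls x| <= 2 * rank (cls x))%N.
Proof.
move=> xA; rewrite card_cls //.
by have := half_le xA (or_introl erefl); have := half_le xA (or_intror erefl); lia.
Qed.

(* Across different classes first factors are neither parallel nor
   orthogonal, so the tails are orthogonal. *)
Lemma tail_orth_cross {x i k} : i \in cls x -> k \in A :\: cls x ->
  qdot (tail i) (tail k) = 0.
Proof.
move=> iK /setDP[kA kK]; have /andP[iA xi] : (i \in A) && aligned (factor0 x) (factor0 i).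
  by move: iK; rewrite inE.
apply: tail_orth => //; first by apply: contraNneq kK => <-.
apply: contra kK => /eqP ik; rewrite inE kA.
by apply: aligned_trans (factor0_nz iA) xi _; rewrite /aligned ik eqxx orbT.
Qed.

Lemma orth_between_cls x {L1 L2 : {set T}} : L1 \subset cls x -> L2 \subset A :\: cls x ->
  orth_between tail L1 L2.
Proof.
move=> /subsetP s1 /subsetP s2 i k /s1 iK /s2 kR; exact: tail_orth_cross iK kR.
Qed.

Lemma card_cross x {L1 L2 : {set T}} : L1 \subset cls x -> L2 \subset A :\: cls x ->
  #|L1 :|: L2| = (#|L1| + #|L2|)%N.
Proof.
move=> s1; rewrite subsetD => /andP[_ d2]; apply/eqP.
by rewrite (leq_card_setU _ _).2 (disjointWl s1) // disjoint_sym.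
Qed.

Definition saturated (L : {set T}) := L \subset A /\ {in L, forall x, cls x \subset L}.

Lemma saturatedA : saturated A.
Proof. by split=> // x _; apply: cls_sub. Qed.

(* Removing a class keeps a set saturated, as distinct classes are disjoint. *)
Lemma saturatedD {L x} : saturated L -> x \in L -> saturated (L :\: cls x).
Proof.
move=> [sLA clL] xL; have xA := subsetP sLA x xL.
split=> [|y /setDP[yL yK]]; first exact: subset_trans (subsetDl L _) sLA.
rewrite subsetD clL //=; rewrite -setI_eq0; apply/set0Pn => -[i /setIP[iy ix]].
have yA := subsetP sLA y yL.
by move: yK; rewrite -(cls_same xA ix) (cls_same yA iy) (cls_self yA).
Qed.

Lemma saturated_split {L x} : saturated L -> x \in L -> L = cls x :|: (L :\: cls x).
Proof. by move=> [_ clL] xL; rewrite -{1}(setID L (cls x)) (setIidPr (clL x xL)). Qed.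

Lemma card_saturated {L x} : saturated L -> x \in L ->
  #|L| = (#|cls x| + #|L :\: cls x|)%N.
Proof.
move=> satL xL; rewrite {1}(saturated_split satL xL) (card_cross x) //.
by rewrite setSD // (proj1 satL).
Qed.

Lemma rk_saturated {L x} : saturated L -> x \in L ->
  rank L = (rank (cls x) + rank (L :\: cls x))%N.
Proof.
move=> satL xL; rewrite {1}(saturated_split satL xL) rk_add //.
by apply: (orth_between_cls x); rewrite // setSD // (proj1 satL).
Qed.

Lemma saturated_ind (P : {set T} -> Prop) : P set0 ->
  (forall L x, saturated L -> x \in L -> P (L :\: cls x) -> P L) ->
  forall L, saturated L -> P L.
Proof.
move=> P0 PS L; elim: {L}_.+1 {-2}L (ltnSn #|L|) => // n IH L ltL satL.
have [->|[x xL]] := set_0Vmem L; first exact: P0.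
apply: (PS _ _ satL xL (IH _ _ (saturatedD satL xL))).
have xx : x \in cls x by apply/cls_self/(subsetP (proj1 satL)).
have := card_saturated satL xL; have : (0 < #|cls x|)%N by apply/card_gt0P; exists x.
lia.
Qed.

(* Summing cls_le over the classes of L. *)
Lemma saturated_le {L} : saturated L -> (#|L| <= 2 * rank L)%N.
Proof.
move: L; apply: (saturated_ind (fun L => #|L| <= 2 * rank L)%N) => [|L x satL xL IH].
  by rewrite cards0.
rewrite (card_saturated satL xL) (rk_saturated satL xL).
by have := cls_le (subsetP (proj1 satL) x xL); lia.
Qed.

(* A class is good when one of its halves spans the tails of the whole class. *)
Definition good x := (#|par x| == rank (cls x)) || (#|orth x| == rank (cls x)).

Lemma good_half {x} : good x -> exists2 X, is_half x X & #|X| = rank (cls x).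
Proof. by case/orP => /eqP e; [exists (par x); [left|] | exists (orth x); [right|]]. Qed.

Lemma saturated_basis {L} : saturated L -> {in L, forall x, good x} ->
  exists Y : {set T}, [/\ Y \subset L, pairwise_orth tail Y & #|Y| = rank L].
Proof.
move: L; apply: (saturated_ind (fun L => {in L, forall x, good x} ->
  exists Y : {set T}, [/\ Y \subset L, pairwise_orth tail Y & #|Y| = rank L])).
  by move=> _; exists set0; rewrite sub0set cards0 rk0; split=> // i j; rewrite inE.
move=> L x satL xL IH goodL; have xA := subsetP (proj1 satL) x xL.
have [|Y [sY oY cY]] := IH; first by move=> y /setDP[yL _]; apply: goodL.
have [X hX cX] := good_half (goodL x xL); have sX := half_sub hX.
have sYR : Y \subset A :\: cls x := subset_trans sY (setSD _ (proj1 satL)).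
exists (X :|: Y); split.
- by rewrite subUset (subset_trans sX (proj2 satL x xL)) (subset_trans sY (subsetDl _ _)).
- exact: (pairwise_orthU tail (half_pairwise_orth xA hX) oY (orth_between_cls x sX sYR)).
- by rewrite (card_cross x) // (rk_saturated satL xL) cX cY.
Qed.

(* A bad class falls short of twice its rank by at least 2 ... *)
Lemma bad_deficit {x} : x \in A -> ~~ good x -> (#|cls x| + 2 <= 2 * rank (cls x))%N.
Proof.
move=> xA; rewrite /good negb_or card_cls // => /andP[np no].
have := half_le xA (or_introl erefl); have := half_le xA (or_intror erefl); lia.
Qed.

(* ... so when 2 rank A < |A| + 4 there is at most one bad class. *)
Lemma lone_bad x : (2 * rank A < #|A| + 4)%N -> x \in A -> ~~ good x ->
  {in A :\: cls x, forall y, good y}.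
Proof.
move=> hA xA bx y yR; apply/negPn/negP => bad_y.
have satR := saturatedD saturatedA xA; have /setDP[yA _] := yR.
have := card_saturated saturatedA xA; have := rk_saturated saturatedA xA.
have := card_saturated satR yR; have := rk_saturated satR yR.
have := saturated_le (saturatedD satR yR).
have := bad_deficit xA bx; have := bad_deficit yA bad_y; lia.
Qed.

Lemma deficient_cls {L} : saturated L -> (#|L| < 2 * rank L)%N ->
  exists2 x, x \in L & (#|cls x| < 2 * rank (cls x))%N.
Proof.
move: L; apply: (saturated_ind (fun L => (#|L| < 2 * rank L)%N ->
  exists2 x, x \in L & (#|cls x| < 2 * rank (cls x))%N)); first by rewrite cards0 rk0.
move=> L x satL xL IH; rewrite (card_saturated satL xL) (rk_saturated satL xL) => hL.
case: (ltnP #|cls x| (2 * rank (cls x))) => hx; first by exists x.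
by have [|y /setDP[yL _] hy] := IH; [lia | exists y].
Qed.

Lemma deficient_half {x} : x \in A -> (#|cls x| < 2 * rank (cls x))%N ->
  exists X : {set T}, [/\ is_half x X, (#|X| < rank (cls x))%N &
    (#|cls x| <= #|X| + rank (cls x))%N].
Proof.
move=> xA; rewrite card_cls // => hx.
have := half_le xA (or_introl erefl); have := half_le xA (or_intror erefl) => lo lp.
case: (ltnP #|par x| (rank (cls x))) => hp.
- by exists (par x); split; [left | | lia].
- by exists (orth x); split; [right | lia | lia].
Qed.

Definition pivot x0 X := [/\ x0 \in A, is_half x0 X,
  {in A :\: cls x0, forall y, good y},
  (#|cls x0| <= #|X| + rank (cls x0))%N &
  (#|X| + rank (A :\: cls x0) < 2 ^ q)%N].

Lemma pivot_deficient x0 : x0 \in A -> (#|cls x0| < 2 * rank (cls x0))%N ->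
  {in A :\: cls x0, forall y, good y} -> exists X, pivot x0 X.
Proof.
move=> x0A hx goodR; have [X [hX ltX leK]] := deficient_half x0A hx.
exists X; split=> //.
by have := rk_bound tail A; have := rk_saturated saturatedA x0A; lia.
Qed.

Lemma pivot_exists : A != set0 -> (#|A| < 2 ^ q.+1)%N -> (2 ^ q.+1 < #|A| + 4)%N ->
  exists x0 X, pivot x0 X.
Proof.
rewrite expnS => An0 hs hl; have rA := rk_bound tail A.
case: (boolP [exists x in A, ~~ good x]) => [/exists_inP[x0 x0A bx0]|/exists_inPn allgood].
  exists x0; apply: pivot_deficient => //; first by have := bad_deficit x0A bx0; lia.
  by apply: lone_bad => //; lia.
have goodA y : y \in A -> good y by move/allgood/negPn.
have goodR x0 : {in A :\: cls x0, forall y, good y} by move=> y /setDP[yA _]; apply: goodA.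
case: (ltnP (rank A) (2 ^ q)) => hrk.
  have [x0 x0A] := set0Pn _ An0; have [X hX cX] := good_half (goodA x0 x0A).
  exists x0, X; split=> //; first by have := cls_le x0A; lia.
  by have := rk_saturated saturatedA x0A; lia.
have [|x0 x0A hx0] := deficient_cls saturatedA; first lia.
by exists x0; apply: pivot_deficient.
Qed.

(* A vector killing the first factor of every member of the class of x0
   outside the half X: that first factor of x0 itself, or its perpendicular. *)
Lemma complement_witness {x0 X} : x0 \in A -> is_half x0 X ->
  exists2 c, nz2 c & {in cls x0 :\: X, forall i, dot2 (factor0 i) c == 0}.
Proof.
move=> x0A [] ->; rewrite clsE setDUl setDv ?set0U ?setU0.
- exists (factor0 x0) => [|i /setDP[]]; first exact: factor0_nz.
  by rewrite inE dot2_eq0C => /andP[].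
- exists (perp (factor0 x0)) => [|i /setDP[]]; first exact/nz2_perp/factor0_nz.
  by rewrite inE dot2_perp oppr_eq0 conjC_eq0 det2_eq0C => /andP[].
Qed.

Lemma pivot_reduction {x0 X} : pivot x0 X ->
  exists Z : {set T}, [/\ Z \subset A, X \subset Z, pairwise_orth tail Z,
    #|Z| = (#|X| + rank (A :\: cls x0))%N &
    forall w, {in Z, forall i, qdot (tail i) w = 0} ->
      {in A :\: cls x0, forall i, qdot (tail i) w = 0}].
Proof.
case=> x0A hX goodR _ _; have satR := saturatedD saturatedA x0A.
have [Y [sY oY cY]] := saturated_basis satR goodR; have sX := half_sub hX.
exists (X :|: Y); split.
- by rewrite subUset (subset_trans sX (cls_sub x0)) (subset_trans sY (subsetDl _ _)).
- exact: subsetUl.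
- exact: (pairwise_orthU tail (half_pairwise_orth x0A hX) oY (orth_between_cls x0 sX sY)).
- by rewrite (card_cross x0) // cY.
move=> w Zw; apply: (rk_orth_ext tail sY) => [|i iY]; last by apply: Zw; rewrite inE iY orbT.
rewrite rk_pairwise_orth ?cY // => i /(subsetP sY) /setDP[iA _].
exact: tail_nz.
Qed.

Lemma gap_step : gap_extendible C q ->
  (2 ^ q.+1 < #|A| + 4)%N -> (#|A| < 2 ^ q.+1)%N ->
  exists2 w, (forall j, nz2 (w j)) & {in A, forall i, factor_orth (V i) w}.
Proof.
move=> IH hl hs; have [A0|An0] := eqVneq A set0.
  by exists (fun=> ket0) => [j|i]; [exact: nz2_ket0 | rewrite A0 inE].
have [x0 [X piv]] := pivot_exists An0 hs hl.
have [Z [ZA XZ oZ cZ extZ]] := pivot_reduction piv.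
case: piv => x0A hX _ leK ltZ.
have [w' nzw' Zw'] : exists2 w', (forall j, nz2 (w' j)) &
    {in Z, forall i, factor_orth (qtail (V i)) w'}.
  apply: IH => [i /(subsetP ZA) iA j | i k iZ kZ ik | |]; rewrite ?cZ //.
  - exact: nzV.
  - by rewrite -qdot_tensor_eq0 oZ.
  have satR := saturatedD saturatedA x0A.
  have := rk_bound tail A; have := rk_saturated saturatedA x0A.
  have := card_saturated saturatedA x0A; have := saturated_le satR.
  by move: hl; rewrite expnS; lia.
have [c nzc hc] := complement_witness x0A hX.
exists (qcons c w') => [j|i iA]; first by rewrite /qcons; case: unlift.
rewrite factor_orth_cons; have [iK|iR] := boolP (i \in cls x0).
  have [iX|iX] := boolP (i \in X); first by rewrite Zw' ?orbT // (subsetP XZ).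
  by rewrite hc // inE iX.
suff /eqP : qdot (tail i) (tensor w') = 0 by rewrite qdot_tensor_eq0 => ->; rewrite orbT.
by apply: extZ => [k kZ|]; [apply/eqP; rewrite qdot_tensor_eq0 Zw' | rewrite inE iR].
Qed.

End Step.

Lemma gap_extendible_all (C : numClosedFieldType) (q : nat) : gap_extendible C q.
Proof.
elim: q => [|q IH] T A V nzV orthV hl hs; last exact: gap_step.
have A0 : A = set0 by apply: cards0_eq; move: hs; rewrite expn0; lia.
by exists (fun=> ket0) => [j|i]; [exact: nz2_ket0 | rewrite A0 inE].
Qed.

Lemma UPB_factors {C : numClosedFieldType} {p : nat} {S : seq (qvec C p)} :
  is_UPB S -> exists V : 'I_(size S) -> 'I_p -> 'I_2 -> C,
    [/\ forall i : 'I_(size S), nth 0 S i = tensor (V i), forall i j, nz2 (V i j) &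
        forall i k, i != k -> factor_orth (V i) (V k)].
Proof.
case=> uS prodS orthS _.
have /fin_all_exists[V SV] :
    forall i : 'I_(size S), exists v, nth 0 S i = tensor (C := C) v.
  by move=> i; have [[v ->] _] := prodS _ (mem_nth 0 (ltn_ord i)); exists v.
exists V; split=> // [i j|i k ik].
- have [_ norm1] := prodS _ (mem_nth 0 (ltn_ord i)).
  by move: (oner_neq0 C); rewrite -norm1 SV qdot_tensor_eq0 => /existsPn/(_ j).
- rewrite -qdot_tensor_eq0 -!SV orthS ?mem_nth //.
  by rewrite nth_uniq // (inj_eq val_inj).
Qed.

Lemma UPB_no_orth_product {C : numClosedFieldType} {p : nat} {S : seq (qvec C p)} {z} :
  is_UPB S -> is_product z -> qdot z z != 0 -> ~ {in S, forall x, qdot x z = 0}.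
Proof.
case=> _ _ _ unext pz zz Sz; have [zS|zS] := boolP (z \in S).
  by move: zz; rewrite Sz ?eqxx.
have z0 : z != 0.
  by apply: contra zz => /eqP ->; rewrite /qdot big1 // => b _; rewrite ffunE mulr0.
by have [x xS] := unext z pz z0 zS; rewrite Sz ?eqxx.
Qed.

Theorem proposition2 (C : numClosedFieldType) (p s : nat) :
  (2 ^ p < s + 4)%N -> (s < 2 ^ p)%N ->
  ~ exists S : seq (qvec C p), size S = s /\ is_UPB S.
Proof.
move=> hl hs [S [sizeS upbS]]; have [V [SV nzV orthV]] := UPB_factors upbS.
have cardS : #|[set: 'I_(size S)]| = s by rewrite cardsT card_ord.
have := @gap_extendible_all C p _ [set: 'I_(size S)] V
  (fun i _ => nzV i) (fun i k _ _ => orthV i k).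
rewrite cardS => /(_ hl hs) [w nzw Sw].
apply: (UPB_no_orth_product upbS (ex_intro _ w erefl) (tensor_nz nzw)) => x xS.
have ix : (index x S < size S)%N by rewrite index_mem.
apply/eqP; rewrite -(nth_index 0 xS) -[index x S]/(val (Ordinal ix)) SV.
by rewrite qdot_tensor_eq0 Sw ?inE.
Qed.
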